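(* Let $\alpha$ be a probability distribution on $[d]$ with $\alpha_1\ge\cdots\ge\alpha_d$ and fix $k\in[d]$. Then \[ n\mapsto \mathbb E_{\lambda\sim\mathrm{SW}^n(\alpha)}\big[(\lambda_1+\cdots+\lambda_k)-(\alpha_1+\cdots+\alpha_k)n\big] \] is a nondecreasing function of $n\in\mathbb N$.
   Context: $\mathrm{SW}^n(\alpha)$ is the law of the RSK shape $\mathrm{shRSK}(\boldsymbol w)$ (Young diagram $\lambda_1\ge\cdots\ge\lambda_d\ge0$ whose first $k$ rows sum to the maximum total length of $k$ disjoint weakly increasing subsequences of $\boldsymbol w$), where $\boldsymbol w\in[d]^n$ has i.i.d. letters with law $\alpha$. *)

From HB Require Import structures.
From mathcomp Require Import all_boot all_order all_algebra.
Set Implicit Arguments. Unset Strict Implicit. Unset Printing Implicit Defensive.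
Import Order.TTheory GRing.Theory Num.Theory.

(* A "k-colouring" of positions of a word w of length n: f i = Some c puts
   position i into the c-th subsequence, f i = None leaves it out.
   The colour classes are automatically pairwise disjoint. *)
Definition valid_coloring (d n k : nat) (w : n.-tuple 'I_d)
    (f : {ffun 'I_n -> option 'I_k}) : bool :=
  [forall i : 'I_n, forall j : 'I_n,
     ((i < j)%N && (f i != None) && (f i == f j)) ==>
       (nat_of_ord (tnth w i) <= nat_of_ord (tnth w j))%N].

Definition coloring_size (n k : nat) (f : {ffun 'I_n -> option 'I_k}) : nat :=
  #|[set i : 'I_n | f i != None]|.

(* lambda_1 + ... + lambda_k for lambda = shRSK(w): the maximum total length
   of k disjoint weakly increasing subsequences of w. *)
Definition shRSK_topsum (d n k : nat) (w : n.-tuple 'I_d) : nat :=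
  \max_(f : {ffun 'I_n -> option 'I_k} | valid_coloring w f) coloring_size f.

Definition word_prob (R : pzRingType) (d n : nat) (alpha : 'I_d -> R)
    (w : n.-tuple 'I_d) : R :=
  \prod_(i < n) alpha (tnth w i).

Definition SW_excess (R : pzRingType) (d k n : nat) (alpha : 'I_d -> R) : R :=
  (\sum_(w : n.-tuple 'I_d) word_prob alpha w * (shRSK_topsum k w)%:R)%R
  - ((\sum_(i : 'I_d | (i < k)%N) alpha i) * n%:R)%R.

From HB Require Import structures.
From mathcomp Require Import all_boot all_order all_algebra.
Import Order.TTheory GRing.Theory Num.Theory.
Set Implicit Arguments. Unset Strict Implicit. Unset Printing Implicit Defensive.

(* Prepending a letter x to a word w never decreases lambda_1 + ... + lambda_k,
   and increases it by at least one when x < k.  For the latter, take an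
   optimal colouring f of w, add position 0 to its support S, and recolour
   each j in S by the length of the longest strictly decreasing chain of S
   ending at j (Mirsky's dual of Dilworth).  Such a chain has at most k
   elements: through position 0 its letters are distinct and <= x < k, and
   otherwise its elements carry distinct f-colours because f-colour classes
   are weakly increasing.  Equal heights then force weak increase, giving a
   valid k-colouring of x :: w of size |S| + 1.  Averaging over the first
   letter, E_(n+1)[lambda_1+...+lambda_k] >= E_n[...] + alpha_1+...+alpha_k. *)

Lemma card_le_of_lt_neq (m p : nat) (T : {set 'I_m}) (phi : 'I_m -> 'I_p) :
  {in T &, forall b c : 'I_m, (b < c)%N -> phi b != phi c} -> (#|T| <= p)%N.
Proof.
move=> phi_neq; rewrite -[p]card_ord; apply: (@leq_card_in _ _ phi) => b c bT cT e.
case: (ltngtP b c) => [lt_bc|lt_cb|/val_inj //].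
- by move: (phi_neq _ _ bT cT lt_bc); rewrite e eqxx.
- by move: (phi_neq _ _ cT bT lt_cb); rewrite e eqxx.
Qed.

Lemma valid_coloringP (d n k : nat) (w : n.-tuple 'I_d)
    (f : {ffun 'I_n -> option 'I_k}) (i j : 'I_n) :
  valid_coloring w f -> (i < j)%N -> f i != None -> f i = f j ->
  (tnth w i <= tnth w j)%N.
Proof.
move=> /forallP /(_ i) /forallP /(_ j) /implyP fij lt_ij fi_some fij_eq.
by apply: fij; rewrite lt_ij fi_some fij_eq eqxx.
Qed.

Lemma shRSK_topsum_attained (d n k : nat) (w : n.-tuple 'I_d) :
  exists2 f : {ffun 'I_n -> option 'I_k},
    valid_coloring w f & shRSK_topsum k w = coloring_size f.
Proof.
have empty_valid : valid_coloring w [ffun=> None : option 'I_k].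
  by apply/forallP => i; apply/forallP => j; rewrite !ffunE eqxx andbF.
have [|f fV maxf] := eq_bigmax_cond (@coloring_size n k) (A := valid_coloring w).
  by apply/card_gt0P; exists [ffun=> None].
by exists f; rewrite // -maxf.
Qed.

Section ConsColoring.
Variables (d n k : nat) (x : 'I_d) (w : n.-tuple 'I_d).

Definition cons_coloring (f : {ffun 'I_n -> option 'I_k}) :
    {ffun 'I_n.+1 -> option 'I_k} :=
  [ffun j => if unlift ord0 j is Some i then f i else None].

Lemma valid_cons_coloring f :
  valid_coloring w f -> valid_coloring [tuple of x :: w] (cons_coloring f).
Proof.
move=> fV; apply/forallP => i; apply/forallP => j; apply/implyP; rewrite !ffunE.
case: (unliftP ord0 i) => [i'|] ->; last by rewrite eqxx andbF.
case: (unliftP ord0 j) => [j'|] ->; last by rewrite ltn0.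
rewrite !tnthS !lift0 ltnS => /andP [/andP [lt_ij fi_some] /eqP fij].
exact: valid_coloringP fV lt_ij fi_some fij.
Qed.

Lemma coloring_size_cons f : coloring_size (cons_coloring f) = coloring_size f.
Proof.
rewrite /coloring_size -(card_imset [set i | f i != None] (@lift_inj _ ord0)).
apply: eq_card => j; rewrite !inE ffunE.
case: (unliftP ord0 j) => [j'|] ->; first by rewrite mem_imset ?inE //; exact: lift_inj.
by apply/esym/negbTE/imsetP => -[i _] /eqP; rewrite (negbTE (neq_lift _ _)).
Qed.

Lemma leq_topsum_cons : (shRSK_topsum k w <= shRSK_topsum k [tuple of x :: w])%N.
Proof.
apply/bigmax_leqP => f fV; rewrite -coloring_size_cons.
exact: leq_bigmax_cond (valid_cons_coloring fV).
Qed.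

End ConsColoring.

Section HeightColoring.
Variables (d n k : nat) (x : 'I_d) (w : n.-tuple 'I_d).
Hypothesis x_lt_k : (x < k.+1)%N.
Variable f : {ffun 'I_n -> option 'I_k.+1}.
Hypothesis fV : valid_coloring w f.

Local Notation xw := [tuple of x :: w].

Definition height_domain : {set 'I_n.+1} :=
  [set j | if unlift ord0 j is Some i then f i != None else true].

Definition decreasing_chain (T : {set 'I_n.+1}) : bool :=
  [forall a in T, forall b in T, (a < b)%N ==> (tnth xw b < tnth xw a)%N].

Definition chain_to (j : 'I_n.+1) (T : {set 'I_n.+1}) : bool :=
  [&& T \subset height_domain, decreasing_chain T, j \in T
    & [forall a in T, (a <= j)%N]].

Definition chain_height (j : 'I_n.+1) : nat := \max_(T | chain_to j T) #|T|.

Lemma decreasing_chain_lt (T : {set 'I_n.+1}) (a b : 'I_n.+1) :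
  decreasing_chain T -> a \in T -> b \in T -> (a < b)%N -> (tnth xw b < tnth xw a)%N.
Proof.
move=> /forallP /(_ a) /implyP dec aT bT lt_ab.
by move: (dec aT) => /forallP /(_ b) /implyP /(_ bT) /implyP; apply.
Qed.

Lemma card_decreasing_chain_through0 (T : {set 'I_n.+1}) :
  decreasing_chain T -> ord0 \in T -> (#|T| <= k.+1)%N.
Proof.
move=> T_dec T0; have le_x b : b \in T -> (tnth xw b <= x)%N.
  move=> bT; case: (unliftP ord0 b) => [b'|] eb; last by rewrite eb tnth0.
  by apply: ltnW; have := decreasing_chain_lt T_dec T0 bT; rewrite eb lift0 tnth0; exact.
apply: (@card_le_of_lt_neq _ _ _ (fun b => inord (tnth xw b))) => b c bT cT lt_bc.
apply/negP => /eqP /(congr1 val) /=.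
rewrite !inordK ?(leq_ltn_trans (le_x _ _) x_lt_k) // => e.
by have := decreasing_chain_lt T_dec bT cT lt_bc; rewrite e ltnn.
Qed.

Lemma card_decreasing_chain_avoiding0 (T : {set 'I_n.+1}) :
  T \subset height_domain -> decreasing_chain T -> ord0 \notin T -> (#|T| <= k.+1)%N.
Proof.
move=> T_dom T_dec T0.
pose colour b := if unlift ord0 b is Some i then odflt ord0 (f i) else ord0.
apply: (@card_le_of_lt_neq _ _ _ colour) => b c bT cT lt_bc.
case: (unliftP ord0 b) => [b'|] eb; last by move: bT; rewrite eb (negbTE T0).
case: (unliftP ord0 c) => [c'|] ec; last by move: cT; rewrite ec (negbTE T0).
have := subsetP T_dom _ bT; have := subsetP T_dom _ cT.
rewrite /colour !inE eb ec !liftK.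
case fb: (f b') => [u|//]; case fc: (f c') => [v|//] _ _ /=.
apply/negP => /eqP euv.
have lt_bc' : (b' < c')%N by move: lt_bc; rewrite eb ec !lift0.
have fb_some : f b' != None by rewrite fb.
have := valid_coloringP fV lt_bc' fb_some; rewrite fb fc euv => /(_ erefl) le_bc.
have := decreasing_chain_lt T_dec bT cT lt_bc; rewrite eb ec !tnthS.
by rewrite ltnNge le_bc.
Qed.

Lemma card_decreasing_chain (T : {set 'I_n.+1}) :
  T \subset height_domain -> decreasing_chain T -> (#|T| <= k.+1)%N.
Proof.
move=> T_dom T_dec; have [T0|T0] := boolP (ord0 \in T).
- exact: card_decreasing_chain_through0.
- exact: card_decreasing_chain_avoiding0.
Qed.

Lemma chain_to_set1 (j : 'I_n.+1) : j \in height_domain -> chain_to j [set j].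
Proof.
move=> j_dom; apply/and4P; split; rewrite ?sub1set ?set11 //.
  by apply/forallP => a; apply/implyP; rewrite inE => /eqP ->;
     apply/forallP => b; apply/implyP; rewrite inE => /eqP ->; rewrite ltnn.
by apply/forallP => a; apply/implyP; rewrite inE => /eqP ->.
Qed.

Lemma chain_height_gt0 (j : 'I_n.+1) : j \in height_domain -> (0 < chain_height j)%N.
Proof.
by move=> j_dom; apply: leq_trans (leq_bigmax_cond _ (chain_to_set1 j_dom)); rewrite cards1.
Qed.

Lemma chain_height_le (j : 'I_n.+1) : (chain_height j <= k.+1)%N.
Proof. by apply/bigmax_leqP => T /and4P [T_dom T_dec _ _]; exact: card_decreasing_chain. Qed.

Lemma chain_to_extend (i j : 'I_n.+1) (T : {set 'I_n.+1}) : chain_to i T -> j \in height_domain -> (i < j)%N ->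
  (tnth xw j < tnth xw i)%N -> j \notin T /\ chain_to j (j |: T).
Proof.
move=> /and4P [T_dom T_dec iT /forallP T_le] j_dom lt_ij lt_wji.
have le_i a : a \in T -> (a <= i)%N by move=> aT; exact: implyP (T_le a) aT.
have lt_j a : a \in T -> (a < j)%N by move=> aT; exact: leq_ltn_trans (le_i _ aT) lt_ij.
have lt_wj a : a \in T -> (tnth xw j < tnth xw a)%N.
  move=> aT; case: (ltngtP a i) => [lt_ai|lt_ia|/val_inj -> //].
    exact: ltn_trans lt_wji (decreasing_chain_lt T_dec aT iT lt_ai).
  by move: (le_i _ aT); rewrite leqNgt lt_ia.
split; first by apply/negP => /lt_j; rewrite ltnn.
apply/and4P; split; rewrite ?setU11 //.
- by rewrite subUset sub1set j_dom T_dom.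
- apply/forallP => a; apply/implyP; rewrite !inE => /orP [/eqP ->|aT];
    apply/forallP => b; apply/implyP; rewrite !inE => /orP [/eqP ->|bT].
  + by rewrite ltnn.
  + by rewrite ltnNge ltnW ?lt_j.
  + by apply/implyP => _; exact: lt_wj.
  + by apply/implyP; exact: decreasing_chain_lt T_dec aT bT.
- apply/forallP => a; apply/implyP; rewrite !inE => /orP [/eqP -> //|aT].
  exact: ltnW (lt_j _ aT).
Qed.

Lemma chain_height_lt (i j : 'I_n.+1) : i \in height_domain -> j \in height_domain ->
  (i < j)%N -> (tnth xw j < tnth xw i)%N -> (chain_height i < chain_height j)%N.
Proof.
move=> i_dom j_dom lt_ij lt_wji.
have [T iT ->] : exists2 T, chain_to i T & chain_height i = #|T|.
  have chains_i : (0 < #|[pred T | chain_to i T]|)%N.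
    by apply/card_gt0P; exists [set i]; rewrite inE chain_to_set1.
  have [T iT maxT] := eq_bigmax_cond (fun T : {set 'I_n.+1} => #|T|) chains_i.
  exists T; first by rewrite inE in iT.
  by rewrite -maxT; apply: eq_bigl => T'; rewrite inE.
have [jT jjT] := chain_to_extend iT j_dom lt_ij lt_wji.
by apply: leq_trans (leq_bigmax_cond _ jjT); rewrite cardsU1 jT.
Qed.

(* Heights lie in 1..k.+1, so height h is encoded as colour h - 1. *)
Definition height_coloring : {ffun 'I_n.+1 -> option 'I_k.+1} :=
  [ffun j => if j \in height_domain then Some (inord (chain_height j).-1) else None].

Lemma valid_height_coloring : valid_coloring xw height_coloring.
Proof.
apply/forallP => i; apply/forallP => j; apply/implyP; rewrite !ffunE.
case i_dom: (i \in height_domain); last by rewrite andbF.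
case j_dom: (j \in height_domain); last by rewrite andbF.
move=> /andP [/andP [lt_ij _] /eqP [] /(congr1 val)].
rewrite /= !inordK ?prednK ?chain_height_le ?chain_height_gt0 // => e.
rewrite leqNgt; apply/negP => /(chain_height_lt i_dom j_dom lt_ij).
by rewrite -(prednK (chain_height_gt0 i_dom)) -(prednK (chain_height_gt0 j_dom)) e ltnn.
Qed.

Lemma coloring_size_height : coloring_size height_coloring = (coloring_size f).+1.
Proof.
have neq_ord0 : ord0 \notin lift ord0 @: [set i | f i != None].
  by apply/imsetP => -[i _] /eqP; rewrite (negbTE (neq_lift _ _)).
rewrite /coloring_size -(card_imset [set i | f i != None] (@lift_inj _ ord0)).
transitivity #|ord0 |: lift ord0 @: [set i | f i != None]|; last by rewrite cardsU1 neq_ord0.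
apply: eq_card => j.
rewrite !inE ffunE /height_domain inE.
case: (unliftP ord0 j) => [j'|] ->; last by rewrite eqxx.
rewrite [lift _ _ == _]eq_sym (negbTE (neq_lift _ _)) mem_imset ?inE; last exact: lift_inj.
by case: (f j').
Qed.

End HeightColoring.

Lemma ltn_topsum_cons (d n k : nat) (x : 'I_d) (w : n.-tuple 'I_d) :
  (x < k.+1)%N -> (shRSK_topsum k.+1 w < shRSK_topsum k.+1 [tuple of x :: w])%N.
Proof.
move=> x_lt_k; have [f fV ->] := shRSK_topsum_attained k.+1 w.
rewrite -(coloring_size_height x w f).
exact: leq_bigmax_cond (valid_height_coloring x_lt_k fV).
Qed.

Lemma topsum_cons_ge (d n k : nat) (x : 'I_d) (w : n.-tuple 'I_d) :
  (shRSK_topsum k w + (x < k) <= shRSK_topsum k [tuple of x :: w])%N.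
Proof.
case: k => [|k]; first by rewrite addn0 leq_topsum_cons.
case: ltnP => [x_lt_k|_]; first by rewrite addn1; exact: ltn_topsum_cons.
by rewrite addn0 leq_topsum_cons.
Qed.

Local Open Scope ring_scope.

Lemma sum_tuple_cons (V : nmodType) (d n : nat) (F : n.+1.-tuple 'I_d -> V) :
  \sum_(t : n.+1.-tuple 'I_d) F t =
  \sum_(x : 'I_d) \sum_(w : n.-tuple 'I_d) F [tuple of x :: w].
Proof.
rewrite pair_big /= (reindex (fun p : 'I_d * n.-tuple 'I_d => [tuple of p.1 :: p.2])) //.
exists (fun t => (thead t, [tuple of behead t])).
  by move=> [a b] _ /=; rewrite theadE; congr pair; apply: val_inj.
by move=> t _ /=; rewrite [RHS]tuple_eta.
Qed.

Lemma word_prob_cons (R : pzRingType) (d n : nat) (alpha : 'I_d -> R)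
    (x : 'I_d) (w : n.-tuple 'I_d) :
  word_prob alpha [tuple of x :: w] = alpha x * word_prob alpha w.
Proof.
by rewrite /word_prob big_ord_recl tnth0; congr (_ * _); apply: eq_bigr => i _; rewrite tnthS.
Qed.

Lemma sum_word_prob (R : pzRingType) (d : nat) (alpha : 'I_d -> R) (n : nat) :
  \sum_(i < d) alpha i = 1 -> \sum_(w : n.-tuple 'I_d) word_prob alpha w = 1.
Proof.
move=> alpha_sum; elim: n => [|n IHn].
  rewrite (eq_bigr (fun _ => 1)) => [|w _]; last by rewrite /word_prob big_ord0.
  by rewrite sumr_const card_tuple.
rewrite sum_tuple_cons -[RHS]alpha_sum; apply: eq_bigr => x _.
by rewrite -[RHS]mulr1 -IHn mulr_sumr; apply: eq_bigr => w _; rewrite word_prob_cons.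
Qed.

Section Expectation.
Variables (R : numDomainType) (d k : nat) (alpha : 'I_d -> R).
Hypotheses (alpha_nneg : forall i, 0 <= alpha i) (alpha_sum : \sum_(i < d) alpha i = 1).

Definition topsum_mean (n : nat) : R :=
  \sum_(w : n.-tuple 'I_d) word_prob alpha w * (shRSK_topsum k w)%:R.

Lemma topsum_mean_step n :
  topsum_mean n + \sum_(i : 'I_d | (i < k)%N) alpha i <= topsum_mean n.+1.
Proof.
have cons_mean (x : 'I_d) : \sum_(w : n.-tuple 'I_d)
    word_prob alpha w * (shRSK_topsum k w + (x < k))%:R = topsum_mean n + (x < k)%:R.
  under eq_bigr do rewrite natrD mulrDr.
  by rewrite big_split -mulr_suml sum_word_prob // mul1r.
have -> : topsum_mean n + \sum_(i : 'I_d | (i < k)%N) alpha i =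
    \sum_(x : 'I_d) alpha x * (topsum_mean n + (x < k)%:R).
  under [RHS]eq_bigr do rewrite mulrDr.
  rewrite big_split -mulr_suml alpha_sum mul1r big_mkcond /=.
  by congr (_ + _); apply: eq_bigr => x _; case: ifP; rewrite ?mulr1 ?mulr0.
rewrite [topsum_mean n.+1]/topsum_mean sum_tuple_cons; apply: ler_sum => x _.
rewrite -cons_mean mulr_sumr; apply: ler_sum => w _.
rewrite word_prob_cons -mulrA; apply: ler_wpM2l; first exact: alpha_nneg.
by apply: ler_wpM2l; [exact: prodr_ge0 | rewrite ler_nat topsum_cons_ge].
Qed.

Lemma SW_excess_step n : SW_excess k n alpha <= SW_excess k n.+1 alpha.
Proof.
rewrite /SW_excess -/(topsum_mean n) -/(topsum_mean n.+1) -natr1 mulrDr mulr1.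
by rewrite opprD addrA lerBrDr addrAC lerD2r topsum_mean_step.
Qed.

End Expectation.

Theorem mainTheorem6 (R : realFieldType) (d : nat) (alpha : 'I_d -> R)
  (alpha_nneg : forall i, 0 <= alpha i)
  (alpha_sum : \sum_(i < d) alpha i = 1)
  (alpha_sorted : forall i j : 'I_d, (i <= j)%N -> alpha j <= alpha i)
  (k : nat) (hk1 : (1 <= k)%N) (hkd : (k <= d)%N) :
  forall m n : nat, (m <= n)%N -> SW_excess k m alpha <= SW_excess k n alpha.
Proof.
apply: (@homo_leq _ (fun n => SW_excess k n alpha) (fun a b => a <= b)) => [a|b a c|n].
- exact: lexx.
- exact: le_trans.
- exact: SW_excess_step.
Qed.
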